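(* Consider an MG-SPA as described in the context with $0\le\gamma<1$, and suppose that: (i) $|r^i(s,a,b)|\le M^i<M<\infty$ for all $i,a,b,s$; (ii) $S$, all $A^i$ and all $B^{\tilde i}$ are finite; (iii) transition probabilities and rewards are stationary; (iv) for every fixed $s\in S$, $f(s,\cdot)$ is a bijection; (v) all agents share one common reward function. Then the minimax operator $L$ is a contraction mapping on $\mathbb V$ (with modulus $\gamma$), i.e. $\|Lv-Lu\|\le\gamma\|v-u\|$ for all $u,v\in\mathbb V$.
   Context: An MG-SPA consists of: agents $\mathcal N=\{1,\dots,N\}$ and adversaries $\mathcal M=\{\tilde 1,\dots,\tilde N\}$ (adversary $\tilde i$ paired with agent $i$); state space $S$; agent action sets $A^i$, joint $A=\prod_iA^i$; adversary action sets $B^{\tilde i}$, joint $B=\prod B^{\tilde i}$; rewards $r^i:S\times A\times B\to\mathbb R$; transition kernel $p:S\times A\times B\to\Delta(S)$; a perturbation function $f$ with $f(s,b^{\tilde i})\in\mathcal B(\epsilon,s)\subset S$; discount $\gamma$. Given true state $s$, adversary $\tilde i$ draws $b^{\tilde i}\sim\rho^{\tilde i}(\cdot\mid s)$, agent $i$ observes $\tilde s^i=f(s,b^{\tilde i})$ and draws $a^i\sim\pi^i(\cdot\mid\tilde s^i)$, next state $\sim p(\cdot\mid s,a,b)$; agent $i$ gets $r^i$, adversary $\tilde i$ gets $-r^i$. Value functions $v^{\pi,\rho,i}(s)=\mathbb E[\sum_{t\ge1}\gamma^{t-1}r^i_t\mid s_1=s]$. A robust equilibrium $(\pi_*,\rho_*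 )$ is a joint policy with $v^{(\pi_*^{-i},\pi_*^i,\rho_*^{-\tilde i},\rho^{\tilde i}),i}(s)\ge v^{(\pi_*,\rho_* ),i}(s)\ge v^{(\pi_*^{-i},\pi^i,\rho_*^{-\tilde i},\rho_*^{\tilde i}),i}(s)$ for all $i,s,\pi^i,\rho^{\tilde i}$. $V$ is the set of bounded real functions on $S$ with sup norm; $\mathbb V=V^N$ with $\|v\|=\sup_j\|v^j\|$. For a joint policy $d$, $r_d^i$ is the expected one-step reward vector of agent $i$ and $P_d$ the induced transition matrix. Minimax operator: $L^iv^i(s)=\max_{\pi^i}\min_{\rho^{\tilde i}}[r^i_d+\gamma P_dv^i](s)$ with $d=(\pi_*^{-i},\pi^i,\rho_*^{-\tilde i},\rho^{\tilde i})$ ($\pi_*^{-i},\rho_*^{-\tilde i}$ the other players' robust-equilibrium policies), and $Lv=(L^1v^1,\dots,L^Nv^N)$. *)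

From HB Require Import structures.
From mathcomp Require Import all_boot all_order all_algebra.
From mathcomp Require Import all_classical all_reals all_analysis.
Set Implicit Arguments. Unset Strict Implicit. Unset Printing Implicit Defensive.
Import Order.TTheory GRing.Theory Num.Theory.
Local Open Scope ring_scope.
Local Open Scope classical_set_scope.

Section MGSPA.
Variables (R : realType) (N : nat) (S : finType) (A B : 'I_N -> finType).

Definition JA := {dffun forall i : 'I_N, A i}.
Definition JB := {dffun forall i : 'I_N, B i}.

Definition is_dist (T : finType) (q : T -> R) :=
  (forall x, 0 <= q x) /\ \sum_(x : T) q x = 1.

(* a (stationary, Markov) policy: state (observed state for agents) -> distribution *)
Definition is_policy (T : finType) (pol : S -> T -> R) := forall s, is_dist (pol s).

(* joint policies: pi i (observed state) (action of agent i),
   rho i (true state) (action of adversary i) *)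
Definition agent_pols := forall i : 'I_N, S -> A i -> R.
Definition adv_pols := forall i : 'I_N, S -> B i -> R.

Definition with_pol (pis : agent_pols) (i : 'I_N) (pol : S -> A i -> R) : agent_pols :=
  @dfwith _ (fun j : 'I_N => S -> A j -> R) pis i pol.
Definition with_adv (rhos : adv_pols) (i : 'I_N) (rh : S -> B i -> R) : adv_pols :=
  @dfwith _ (fun j : 'I_N => S -> B j -> R) rhos i rh.

(* perturbation function: adversary i's action b perturbs the true state s
   into the state f i s b observed by agent i *)
Variable f : forall i : 'I_N, S -> B i -> S.

Definition joint_weight (pi : agent_pols) (rho : adv_pols) (s : S) (a : JA) (b : JB) : R :=
  (\prod_(i < N) rho i s (b i)) * (\prod_(i < N) pi i (f s (b i)) (a i)).

Definition rd (ri : S -> JA -> JB -> R) (pi : agent_pols) (rho : adv_pols) (s : S) : R :=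
  \sum_(b : JB) \sum_(a : JA) joint_weight pi rho s a b * ri s a b.

Definition Pd (p : S -> JA -> JB -> S -> R) (pi : agent_pols) (rho : adv_pols) (s s' : S) : R :=
  \sum_(b : JB) \sum_(a : JA) joint_weight pi rho s a b * p s a b s'.

Definition Pdv p pi rho (w : S -> R) : S -> R :=
  fun s => \sum_(s' : S) Pd p pi rho s s' * w s'.

(* value function v^{pi,rho,i}(s) = E[ sum_{t>=1} gamma^{t-1} r^i_t | s_1 = s ]
   = sum_{t>=0} gamma^t (P_d^t r_d^i)(s) *)
Definition value (gamma : R) (ri : S -> JA -> JB -> R) p pi rho : S -> R :=
  fun s => limn (fun n : nat =>
    \sum_(t < n) gamma ^+ t * iter t (Pdv p pi rho) (rd ri pi rho) s).

Definition robust_equilibrium (gamma : R) (r : 'I_N -> S -> JA -> JB -> R) p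
    (pis : agent_pols) (rhos : adv_pols) :=
  (forall i, is_policy (pis i)) /\ (forall i, is_policy (rhos i)) /\
  forall (i : 'I_N) (s : S) (pol : S -> A i -> R) (rh : S -> B i -> R),
    is_policy pol -> is_policy rh ->
    value gamma (r i) p pis (with_adv rhos rh) s >= value gamma (r i) p pis rhos s /\
    value gamma (r i) p pis rhos s >= value gamma (r i) p (with_pol pis pol) rhos s.

Definition Qval (gamma : R) (r : 'I_N -> S -> JA -> JB -> R) p
    (pis : agent_pols) (rhos : adv_pols) (i : 'I_N)
    (pol : S -> A i -> R) (rh : S -> B i -> R) (w : S -> R) (s : S) : R :=
  rd (r i) (with_pol pis pol) (with_adv rhos rh) s
  + gamma * Pdv p (with_pol pis pol) (with_adv rhos rh) w s.

Definition Lop_i gamma r p pis rhos (i : 'I_N) (w : S -> R) (s : S) : R :=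
  sup [set x : R | exists pol : S -> A i -> R, is_policy pol /\
        x = inf [set y : R | exists rh : S -> B i -> R, is_policy rh /\
                   y = Qval gamma r p pis rhos pol rh w s]].

Definition Lop gamma r p pis rhos (v : 'I_N -> S -> R) : 'I_N -> S -> R :=
  fun i => Lop_i gamma r p pis rhos i (v i).

(* sup norm on VV = V^N (S finite, so every function is bounded) *)
Definition normV (v : 'I_N -> S -> R) : R :=
  \big[Num.max/0]_(j < N) \big[Num.max/0]_(s : S) `|v j s|.

End MGSPA.

From HB Require Import structures.
From mathcomp Require Import all_boot all_order all_algebra.
From mathcomp Require Import all_classical all_reals all_analysis.
Import Order.TTheory GRing.Theory Num.Theory.
Local Open Scope ring_scope.

(* For any fixed joint policy d, the map w |-> r_d + gamma P_d w is gamma-Lipschitz in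
   the sup norm, because P_d is a stochastic matrix (a convex combination of the
   rows of the kernel p, weighted by the product distribution of the joint policy).
   A max-min of gamma-Lipschitz maps is again gamma-Lipschitz, provided everything
   stays bounded so that the real sup and inf are meaningful; boundedness comes from
   the bounded rewards and the finiteness of S. *)

Lemma sum_dffun_prod (R : comNzRingType) (I : finType) (T : I -> finType)
    (q : forall i, T i -> R) :
  \sum_(g : {dffun forall i, T i}) \prod_i q i (g i) = \prod_i \sum_(t : T i) q i t.
Proof.
have untag_q i (t : T i) : untag 0 (q i) (Tagged T t) = q i t.
  exact: (@untagE _ _ _ 0 i (q i) (Tagged T t) (erefl i)).
under eq_bigr do rewrite (big_tag (fun i => q i)).
rewrite bigA_distr_big_dep [RHS]big_sub.
rewrite [RHS](reindex (@to_family_tagged_with I T)); last first.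
  by exists of_family_tagged_with => x _;
    [rewrite to_family_tagged_withK | rewrite of_family_tagged_withK].
rewrite [RHS](reindex (@fprod_of_dffun I T)); last first.
  by exists (@dffun_of_fprod I T) => x _;
    [rewrite fprod_of_dffunK | rewrite dffun_of_fprodK].
by apply: eq_bigr => g _; apply: eq_bigr => i _ /=; rewrite ffunE untag_q.
Qed.

Lemma normr_convex_comb_le (R : numDomainType) (T : finType) (q X : T -> R) (C : R) :
  (forall x, 0 <= q x) -> \sum_x q x = 1 -> (forall x, `|X x| <= C) ->
  `|\sum_x q x * X x| <= C.
Proof.
move=> q_ge0 q_sum1 X_le.
apply: le_trans (ler_norm_sum _ _ _) _.
apply: (@le_trans _ _ (\sum_x q x * C)).
  by apply: ler_sum => x _; rewrite normrM ger0_norm // ler_wpM2l.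
by rewrite -big_distrl /= q_sum1 mul1r.
Qed.

Section SupInf.
Variables (R : realType) (X Y : Type) (PX : X -> Prop) (PY : Y -> Prop).

Definition sup_inf (F : X -> Y -> R) : R :=
  sup [set z | exists x, PX x /\ z = inf [set w | exists y, PY y /\ w = F x y]].

Variable K : R.
Hypotheses (PX_inhabited : exists x, PX x) (PY_inhabited : exists y, PY y).

Definition bounded_on (F : X -> Y -> R) := forall x y, PX x -> PY y -> `|F x y| <= K.

Lemma inf_section_le {F x y} : bounded_on F -> PX x -> PY y ->
  inf [set w | exists y, PY y /\ w = F x y] <= F x y.
Proof.
move=> F_bd PXx PYy; apply: ge_inf; last by exists y.
exists (- K) => _ [y' [PYy' ->]].
by have := F_bd x y' PXx PYy'; rewrite ler_norml => /andP[].
Qed.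

Lemma sup_inf_le_add F G c : bounded_on F -> bounded_on G ->
    (forall x y, PX x -> PY y -> F x y <= G x y + c) ->
  sup_inf F <= sup_inf G + c.
Proof.
move=> F_bd G_bd FG; have [x0 PXx0] := PX_inhabited; have [y0 PYy0] := PY_inhabited.
have G_has_sup : has_sup [set z | exists x, PX x /\
    z = inf [set w | exists y, PY y /\ w = G x y]].
  split; first by eexists; exists x0.
  exists K => _ [x [PXx ->]]; apply: le_trans (inf_section_le G_bd PXx PYy0) _.
  by have := G_bd x y0 PXx PYy0; rewrite ler_norml => /andP[].
apply: ge_sup; first by eexists; exists x0.
move=> _ [x [PXx ->]].
apply: (@le_trans _ _ (inf [set w | exists y, PY y /\ w = G x y] + c)).
  rewrite -lerBlDr; apply: lb_le_inf; first by eexists; exists y0.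
  move=> _ [y [PYy ->]]; rewrite lerBlDr.
  exact: le_trans (inf_section_le F_bd PXx PYy) (FG x y PXx PYy).
by rewrite lerD2r; apply: sup_upper_bound => //; exists x.
Qed.

Lemma normr_sup_infB_le F G c : bounded_on F -> bounded_on G ->
    (forall x y, PX x -> PY y -> `|F x y - G x y| <= c) ->
  `|sup_inf F - sup_inf G| <= c.
Proof.
move=> F_bd G_bd FG; rewrite ler_norml; apply/andP; split.
- rewrite lerNl opprB lerBlDr addrC; apply: sup_inf_le_add => // x y PXx PYy.
  by rewrite -lerBlDl; have := FG x y PXx PYy; rewrite distrC ler_norml => /andP[_].
- rewrite lerBlDr addrC; apply: sup_inf_le_add => // x y PXx PYy.
  by rewrite -lerBlDl; have := FG x y PXx PYy; rewrite ler_norml => /andP[_].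
Qed.

End SupInf.

Section JointPolicy.
Context {R : realType} {N : nat} {S : finType} {A B : 'I_N -> finType}.
Variable f : forall i : 'I_N, S -> B i -> S.

Lemma with_pol_policy {pis : agent_pols R S A} {i} {pol : S -> A i -> R} :
  (forall j, is_policy (pis j)) -> is_policy pol ->
  forall j : 'I_N, is_policy (@with_pol _ _ _ _ pis i pol j).
Proof. by move=> pis_pol pol_pol j; rewrite /with_pol; case: dfwithP. Qed.

Lemma with_adv_policy {rhos : adv_pols R S B} {i} {rh : S -> B i -> R} :
  (forall j, is_policy (rhos j)) -> is_policy rh ->
  forall j : 'I_N, is_policy (@with_adv _ _ _ _ rhos i rh j).
Proof. by move=> rhos_pol rh_pol j; rewrite /with_adv; case: dfwithP. Qed.

Variables (pi : agent_pols R S A) (rho : adv_pols R S B).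
Hypotheses (pi_pol : forall j, is_policy (pi j)) (rho_pol : forall j, is_policy (rho j)).

Lemma joint_weight_ge0 s a b : 0 <= joint_weight f pi rho s a b.
Proof.
apply: mulr_ge0; apply: prodr_ge0 => i _.
  by case: (rho_pol i s).
by case: (pi_pol i (f i s (b i))).
Qed.

Lemma joint_weight_sum1 s :
  \sum_(b : JB B) \sum_(a : JA A) joint_weight f pi rho s a b = 1.
Proof.
transitivity (\sum_(b : JB B) \prod_i rho i s (b i)).
  apply: eq_bigr => b _; rewrite /joint_weight -big_distrr /= /JA.
  rewrite (@sum_dffun_prod _ _ _ (fun i (t : A i) => pi i (f i s (b i)) t)).
  by rewrite [X in _ * X]big1 ?mulr1 // => i _; case: (pi_pol i (f i s (b i))).
rewrite /JB (@sum_dffun_prod _ _ _ (fun i (t : B i) => rho i s t)).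
by rewrite big1 // => i _; case: (rho_pol i s).
Qed.

Lemma normr_expect_le s (X : JB B -> JA A -> R) C : (forall b a, `|X b a| <= C) ->
  `|\sum_(b : JB B) \sum_(a : JA A) joint_weight f pi rho s a b * X b a| <= C.
Proof.
move=> X_le; rewrite pair_bigA /=.
apply: (@normr_convex_comb_le _ _ (fun ba => joint_weight f pi rho s ba.2 ba.1)).
- by move=> ba; apply: joint_weight_ge0.
- by rewrite -(pair_bigA _ (fun b a => joint_weight f pi rho s a b)) joint_weight_sum1.
- by move=> ba; apply: X_le.
Qed.

Variable p : S -> JA A -> JB B -> S -> R.

Lemma PdvE (w : S -> R) s : Pdv f p pi rho w s =
  \sum_(b : JB B) \sum_(a : JA A)
    joint_weight f pi rho s a b * \sum_(s' : S) p s a b s' * w s'.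
Proof.
rewrite /Pdv /Pd; under eq_bigr do rewrite big_distrl /=.
rewrite exchange_big; apply: eq_bigr => b _.
under eq_bigr do rewrite big_distrl /=.
rewrite exchange_big; apply: eq_bigr => a _.
by rewrite big_distrr; apply: eq_bigr => s' _; rewrite /= mulrA.
Qed.

Lemma PdvB (w1 w2 : S -> R) s :
  Pdv f p pi rho w1 s - Pdv f p pi rho w2 s = Pdv f p pi rho (fun s' => w1 s' - w2 s') s.
Proof. by rewrite /Pdv -sumrB; apply: eq_bigr => s' _; rewrite mulrBr. Qed.

Hypotheses (p_ge0 : forall s a b s', 0 <= p s a b s')
           (p_sum1 : forall s a b, \sum_(s' : S) p s a b s' = 1).

Lemma normr_Pdv_le (w : S -> R) C : (forall s', `|w s'| <= C) ->
  forall s, `|Pdv f p pi rho w s| <= C.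
Proof.
by move=> w_le s; rewrite PdvE; apply: normr_expect_le => b a; apply: normr_convex_comb_le.
Qed.

End JointPolicy.

Section MinimaxOperator.
Context {R : realType} {N : nat} {S : finType} {A B : 'I_N -> finType}.
Variables (f : forall i : 'I_N, S -> B i -> S) (gamma : R).
Variables (r : 'I_N -> S -> JA A -> JB B -> R) (p : S -> JA A -> JB B -> S -> R).
Variables (pis : agent_pols R S A) (rhos : adv_pols R S B).
Hypotheses (gamma_ge0 : 0 <= gamma)
           (p_ge0 : forall s a b s', 0 <= p s a b s')
           (p_sum1 : forall s a b, \sum_(s' : S) p s a b s' = 1)
           (pis_pol : forall j, is_policy (pis j))
           (rhos_pol : forall j, is_policy (rhos j)).
Variable i : 'I_N.

Section FixedPolicies.
Variables (pol : S -> A i -> R) (rh : S -> B i -> R).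
Hypotheses (pol_pol : is_policy pol) (rh_pol : is_policy rh).

Let pi := with_pol pis pol.
Let rho := with_adv rhos rh.
Let pi_pol : forall j, is_policy (pi j) := with_pol_policy pis_pol pol_pol.
Let rho_pol : forall j, is_policy (rho j) := with_adv_policy rhos_pol rh_pol.

Lemma normr_Qval_le K (w : S -> R) C :
    (forall s a b, `|r i s a b| <= K) -> (forall s', `|w s'| <= C) ->
  forall s, `|Qval f gamma r p pis rhos pol rh w s| <= K + gamma * C.
Proof.
move=> r_le w_le s; apply: le_trans (ler_normD _ _) _; apply: lerD.
  exact: normr_expect_le.
by rewrite normrM ger0_norm // ler_wpM2l // normr_Pdv_le.
Qed.

Lemma normr_QvalB_le (v u : S -> R) C : (forall s', `|v s' - u s'| <= C) ->
  forall s, `|Qval f gamma r p pis rhos pol rh v s - Qval f gamma r p pis rhos pol rh u s|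
            <= gamma * C.
Proof.
move=> vu_le s; rewrite /Qval opprD addrACA subrr add0r -mulrBr.
by rewrite normrM ger0_norm // ler_wpM2l // PdvB normr_Pdv_le.
Qed.

End FixedPolicies.

Lemma normr_Lop_iB_le K (v u : S -> R) C :
    (forall s a b, `|r i s a b| <= K) -> (forall s', `|v s' - u s'| <= C) ->
  forall s, `|Lop_i f gamma r p pis rhos i v s - Lop_i f gamma r p pis rhos i u s|
            <= gamma * C.
Proof.
move=> r_le vu_le s.
have [Cvu vu_bd] : exists Cvu, forall s', `|v s'| <= Cvu /\ `|u s'| <= Cvu.
  exists (\big[Num.max/0]_s' Num.max `|v s'| `|u s'|) => s'.
  by split; apply: le_trans (le_bigmax _ _ s'); rewrite le_max lexx ?orbT.
apply: (@normr_sup_infB_le _ _ _ _ _ (K + gamma * Cvu)).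
- by exists (pis i).
- by exists (rhos i).
- by move=> pol rh pol_pol rh_pol; apply: normr_Qval_le => // s'; case: (vu_bd s').
- by move=> pol rh pol_pol rh_pol; apply: normr_Qval_le => // s'; case: (vu_bd s').
- by move=> pol rh pol_pol rh_pol; apply: normr_QvalB_le.
Qed.

End MinimaxOperator.

Section SupNorm.
Context {R : realType} {N : nat} {S : finType}.
Implicit Type w : 'I_N -> S -> R.

Lemma normV_ge0 w : 0 <= normV w.
Proof. exact: bigmax_ge_id. Qed.

Lemma normr_le_normV w j s : `|w j s| <= normV w.
Proof.
apply: le_trans (le_bigmax _ (fun j => \big[Num.max/0]_s `|w j s|) j).
exact: (le_bigmax _ (fun s => `|w j s|) s).
Qed.

Lemma normV_le w c : 0 <= c -> (forall j s, `|w j s| <= c) -> normV w <= c.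
Proof. by move=> c_ge0 w_le; apply: bigmax_le => // j _; apply: bigmax_le. Qed.

End SupNorm.

Theorem proposition1 (R : realType) (N : nat) (S : finType) (A B : 'I_N -> finType)
  (r : 'I_N -> S -> JA A -> JB B -> R)
  (p : S -> JA A -> JB B -> S -> R)
  (f : forall i : 'I_N, S -> B i -> S)
  (dist : S -> S -> R) (eps : R)
  (gamma M : R) (Mi : 'I_N -> R)
  (pis : agent_pols R S A) (rhos : adv_pols R S B) :
  0 <= gamma -> gamma < 1 ->
  (* p is a transition kernel *)
  (forall s a b s', 0 <= p s a b s') ->
  (forall s a b, \sum_(s' : S) p s a b s' = 1) ->
  (* f(s, b) lies in the eps-ball B(eps, s) *)
  (forall i s b, dist s (f i s b) <= eps) ->
  (* (i) bounded rewards *)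
  (forall i, Mi i < M) ->
  (forall i s a b, `|r i s a b| <= Mi i) ->
  (* (iv) f(s, .) is a bijection from B^i onto B(eps, s) *)
  (forall i s, injective (f i s)) ->
  (forall i s s', dist s s' <= eps -> exists b, f i s b = s') ->
  (* (v) common reward *)
  (forall i j, r i = r j) ->
  (* (pis, rhos) is a robust equilibrium *)
  robust_equilibrium f gamma r p pis rhos ->
  forall u v : 'I_N -> S -> R,
    normV (fun j s => Lop f gamma r p pis rhos v j s - Lop f gamma r p pis rhos u j s)
    <= gamma * normV (fun j s => v j s - u j s).
Proof.
move=> gamma_ge0 _ p_ge0 p_sum1 _ _ r_le _ _ _ [pis_pol [rhos_pol _]] u v.
apply: normV_le => [|j s]; first by rewrite mulr_ge0 ?normV_ge0.
apply: normr_Lop_iB_le => //.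
by move=> s'; apply: (normr_le_normV (fun j s => v j s - u j s)).
Qed.
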